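(* For any group $B$ and any integer $p\ge 2$, $$cw(B\wr C_p)\le\max(1,cw(B)).$$
   Context: $B\wr C_p=B^p\rtimes C_p$ is the wreath product with $C_p$ acting on $\{1,\dots,p\}$ by cyclic shifts. The commutator width $cw(G)$ of a group $G$ is the least $n$ such that every element of the derived subgroup $G'$ is a product of at most $n$ commutators $[x,y]=xyx^{-1}y^{-1}$ ($cw(G)=\infty$ if no such $n$ exists). *)

(* Abstract (possibly infinite) groups are given by a carrier
   type with explicit operations; the group axioms are a hypothesis. *)
From mathcomp Require Import all_boot all_algebra.
Set Implicit Arguments. Unset Strict Implicit. Unset Printing Implicit Defensive.
Import GRing.Theory.
Local Open Scope ring_scope.

Definition is_group (T : Type) (mul : T -> T -> T) (inv : T -> T) (one : T) : Prop :=
  [/\ forall x y z, mul x (mul y z) = mul (mul x y) z,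
      forall x, mul one x = x, forall x, mul x one = x,
      forall x, mul (inv x) x = one & forall x, mul x (inv x) = one].

Section Comm.
Variables (T : Type) (mul : T -> T -> T) (inv : T -> T) (one : T).

Definition commg_op (x y : T) : T := mul x (mul y (mul (inv x) (inv y))).

Inductive in_derived : T -> Prop :=
| der_one : in_derived one
| der_comm x y : in_derived (commg_op x y)
| der_mul a b : in_derived a -> in_derived b -> in_derived (mul a b)
| der_inv a : in_derived a -> in_derived (inv a).

Definition prod_comms (s : seq (T * T)) : T :=
  foldr (fun c acc => mul (commg_op c.1 c.2) acc) one s.

Definition cw_le (n : nat) : Prop :=
  forall g, in_derived g -> exists s : seq (T * T), (size s <= n)%N /\ g = prod_comms s.
End Comm.

(* Wreath product B wr C_p = B^p >| C_p, with C_p = 'Z_p (p >= 2) acting on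
   B^p = ('Z_p -> B) by cyclic shifts: (a . f)(i) = f (i - a). *)
Section Wreath.
Variables (B : Type) (mul : B -> B -> B) (inv : B -> B) (one : B) (p : nat).

Definition wr_T : Type := (('Z_p -> B) * 'Z_p)%type.
Definition shift (a : 'Z_p) (f : 'Z_p -> B) : 'Z_p -> B := fun i => f (i - a).
Definition wr_mul (x y : wr_T) : wr_T :=
  (fun i => mul (x.1 i) (shift x.2 y.1 i), x.2 + y.2).
Definition wr_inv (x : wr_T) : wr_T :=
  (shift (- x.2) (fun i => inv (x.1 i)), - x.2).
Definition wr_one : wr_T := (fun _ => one, 0).
End Wreath.

From mathcomp Require Import all_boot all_algebra.
From Stdlib Require Import FunctionalExtensionality.
Set Implicit Arguments. Unset Strict Implicit. Unset Printing Implicit Defensive.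
Import GRing.Theory.

(* The coordinate product (f, a) |-> f 0 * ... * f (p-1) is a homomorphism
   from B wr C_p to B modulo B', so an element w of the derived subgroup of
   B wr C_p has trivial C_p-component and coordinate product in B'.  Write that
   product as [x, y] * r, with r a product of fewer than max(1, cw(B))
   commutators, and move r into the last coordinate: w = (c, 0) * (r at the
   last coordinate, 0), where c has coordinate product exactly [x, y].  Such a
   (c, 0) is a single commutator of B wr C_p, and the second factor is a
   product of commutators of elements supported on the last coordinate. *)

Lemma val_Zp_add1 (p : nat) (i : 'Z_p) : i != ord_max -> (i + 1)%R = i.+1 :> nat.
Proof.
move=> /eqP ni; have iS : (val i).+1 < (Zp_trunc p).+2.
  rewrite ltnS ltn_neqAle -ltnS ltn_ord andbT.
  by apply/eqP => iN; apply: ni; apply: val_inj.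
by rewrite /= (modn_small (m := 1)) // addn1 modn_small.
Qed.

Lemma ord_max_add1 (p : nat) : (ord_max + 1 : 'Z_p)%R = 0%R.
Proof. by apply: val_inj; rewrite /= (modn_small (m := 1)) // addn1 modnn. Qed.

Declare Scope bgroup_scope.

Section WreathCommutators.
Variables (B : Type) (mul : B -> B -> B) (inv : B -> B) (one : B).
Hypothesis HG : is_group mul inv one.

Local Notation "x * y" := (mul x y) : bgroup_scope.
Local Notation "x ^-1" := (inv x) : bgroup_scope.
Local Notation D := (in_derived mul inv one).
Local Open Scope bgroup_scope.

Lemma mulgA x y z : x * (y * z) = x * y * z. Proof. by case: HG. Qed.
Lemma mul1g x : one * x = x. Proof. by case: HG. Qed.
Lemma mulg1 x : x * one = x. Proof. by case: HG. Qed.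
Lemma mulVg x : x^-1 * x = one. Proof. by case: HG. Qed.
Lemma mulgV x : x * x^-1 = one. Proof. by case: HG. Qed.
Lemma mulKg x y : x^-1 * (x * y) = y. Proof. by rewrite mulgA mulVg mul1g. Qed.
Lemma mulVKg x y : x * (x^-1 * y) = y. Proof. by rewrite mulgA mulgV mul1g. Qed.
Lemma mulg1_eq x y : x * y = one -> x^-1 = y.
Proof. by move=> xy1; rewrite -[x^-1]mulg1 -xy1 mulKg. Qed.
Lemma invg1 : one^-1 = one. Proof. by apply: mulg1_eq; rewrite mul1g. Qed.
Lemma invgK x : (x^-1)^-1 = x. Proof. by apply: mulg1_eq; rewrite mulVg. Qed.
Lemma invgM x y : (x * y)^-1 = y^-1 * x^-1.
Proof. by apply: mulg1_eq; rewrite -mulgA mulVKg mulgV. Qed.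

Lemma in_derived_conj w a : D a -> D (w * a * w^-1).
Proof.
move=> Da; have -> : w * a * w^-1 = commg_op mul inv w a * a.
  by rewrite /commg_op -!mulgA mulVg mulg1.
exact: der_mul (der_comm _ _ _ _ _) Da.
Qed.

Definition eqmodD u v := D (u * v^-1).

Lemma eqmodD_refl u : eqmodD u u.
Proof. by rewrite /eqmodD mulgV; apply: der_one. Qed.

Lemma eqmodD_trans u v w : eqmodD u v -> eqmodD v w -> eqmodD u w.
Proof. by move=> uv vw; have := der_mul uv vw; rewrite -mulgA mulKg. Qed.

Lemma eqmodD_mulr w u v : eqmodD u v -> eqmodD (u * w) (v * w).
Proof. by rewrite /eqmodD invgM mulgA -(mulgA u) mulgV mulg1. Qed.

Lemma eqmodD_mull w u v : eqmodD u v -> eqmodD (w * u) (w * v).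
Proof. by move=> /(in_derived_conj w); rewrite /eqmodD invgM !mulgA. Qed.

Lemma eqmodDM u v u' v' : eqmodD u v -> eqmodD u' v' -> eqmodD (u * u') (v * v').
Proof. by move=> uv uv'; apply: eqmodD_trans (eqmodD_mulr _ uv) (eqmodD_mull _ uv'). Qed.

Lemma eqmodD_mulC u v : eqmodD (u * v) (v * u).
Proof. by rewrite /eqmodD invgM -mulgA; apply: der_comm. Qed.

Lemma eqmodD_in_derived u v : eqmodD u v -> D v -> D u.
Proof. by move=> uv Dv; have := der_mul uv Dv; rewrite -mulgA mulVg mulg1. Qed.

Definition prodg (s : seq B) : B := foldr mul one s.

Lemma prodg_cat s t : prodg (s ++ t) = prodg s * prodg t.
Proof. by elim: s => [|x s IHs] /=; rewrite ?mul1g // IHs mulgA. Qed.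

Lemma prodg1 (I : Type) (s : seq I) : prodg [seq one | _ <- s] = one.
Proof. by elim: s => //= _ s ->; rewrite mul1g. Qed.

Lemma prodg_perm_eqmodD (I : eqType) (s t : seq I) (f : I -> B) :
  perm_eq s t -> eqmodD (prodg (map f s)) (prodg (map f t)).
Proof.
elim: s t => [|x s IHs] t; first by rewrite perm_sym => /perm_nilP ->; apply: eqmodD_refl.
move=> pst; have xt : x \in t by rewrite -(perm_mem pst) mem_head.
case/splitPr: xt pst => t1 t2 pst.
have ps : perm_eq s (t1 ++ t2).
  by rewrite -(perm_cons x) (permPl pst) -cat1s perm_catCA.
rewrite /= !map_cat !prodg_cat /=.
apply: eqmodD_trans (eqmodD_mull _ (IHs _ ps)) _.
by rewrite map_cat prodg_cat !mulgA; apply/eqmodD_mulr/eqmodD_mulC.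
Qed.

Lemma prodgM_eqmodD (I : Type) (s : seq I) (f g : I -> B) :
  eqmodD (prodg [seq f i * g i | i <- s]) (prodg (map f s) * prodg (map g s)).
Proof.
elim: s => [|i s IHs] /=; first by rewrite mul1g; apply: eqmodD_refl.
apply: eqmodD_trans (eqmodD_mull _ IHs) _.
by rewrite -!mulgA; apply: eqmodD_mull; rewrite !mulgA; apply/eqmodD_mulr/eqmodD_mulC.
Qed.

Lemma prodgV_eqmodD (I : Type) (s : seq I) (f : I -> B) :
  eqmodD (prodg [seq (f i)^-1 | i <- s]) (prodg (map f s))^-1.
Proof.
elim: s => [|i s IHs] /=; first by rewrite invg1; apply: eqmodD_refl.
by apply: eqmodD_trans (eqmodD_mull _ IHs) _; rewrite invgM; apply: eqmodD_mulC.
Qed.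

Lemma in_derived_morph (G : Type) (gmul : G -> G -> G) (ginv : G -> G) (gone : G)
    (phi : G -> B) :
  D (phi gone) ->
  (forall x y, eqmodD (phi (gmul x y)) (phi x * phi y)) ->
  (forall x, eqmodD (phi (ginv x)) (phi x)^-1) ->
  forall g, in_derived gmul ginv gone g -> D (phi g).
Proof.
move=> phi1 phiM phiV g; elim=> [|x y|a b _ Da _ Db|a _ Da] //.
- apply: eqmodD_in_derived (der_comm _ _ _ (phi x) (phi y)).
  rewrite /commg_op; apply: eqmodD_trans (phiM _ _) (eqmodD_mull _ _).
  apply: eqmodD_trans (phiM _ _) (eqmodD_mull _ _).
  exact: eqmodD_trans (phiM _ _) (eqmodDM (phiV _) (phiV _)).
- exact: eqmodD_in_derived (phiM a b) (der_mul Da Db).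
- exact: eqmodD_in_derived (phiV a) (der_inv Da).
Qed.

Lemma cw_le_commg_cons n g : cw_le mul inv one n -> D g ->
  exists x y s, g = commg_op mul inv x y * prod_comms mul inv one s
                /\ (size s < maxn 1 n)%N.
Proof.
move=> cwB /cwB [[|[x y] s] [sz ->]].
  exists one, one, [::]; split; last by rewrite leq_max.
  by rewrite /= /commg_op invg1 !mul1g.
by exists x, y, s; rewrite leq_max sz orbT.
Qed.

Variable p : nat.

Local Notation Z := 'Z_p.
Local Notation W := (wr_T B p).
Local Notation wmul := (@wr_mul B mul p).
Local Notation winv := (@wr_inv B inv p).
Local Notation wone := (wr_one one p).
Local Open Scope ring_scope.
Local Open Scope bgroup_scope.

Definition wr_prod (f : Z -> B) : B := prodg (map f (enum Z)).

Lemma perm_enum_shift (a : Z) : perm_eq [seq i - a | i <- enum Z] (enum Z).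
Proof.
apply: uniq_perm; rewrite ?(map_inj_uniq (subIr a)) ?enum_uniq // => i.
by rewrite mem_enum; apply/mapP; exists (i + a); rewrite ?mem_enum ?addrK.
Qed.

Lemma wr_prod_shift a f : eqmodD (wr_prod (shift a f)) (wr_prod f).
Proof.
rewrite /wr_prod /shift.
have -> : [seq f (i - a) | i <- enum Z] = map f [seq i - a | i <- enum Z].
  by rewrite -[in RHS]map_comp.
exact: (prodg_perm_eqmodD f (perm_enum_shift a)).
Qed.

Lemma wr_prodM (x y : W) : eqmodD (wr_prod (wmul x y).1) (wr_prod x.1 * wr_prod y.1).
Proof.
apply: (eqmodD_trans (prodgM_eqmodD _ _ _)).
exact/eqmodD_mull/wr_prod_shift.
Qed.

Lemma wr_prodV (x : W) : eqmodD (wr_prod (winv x).1) (wr_prod x.1)^-1.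
Proof.
apply: (eqmodD_trans (wr_prod_shift _ _)).
exact: prodgV_eqmodD.
Qed.

Lemma in_derived_wr_top w : in_derived wmul winv wone w -> w.2 = 0.
Proof.
elim=> [|x y|a b _ /= -> _ ->|a _ /= ->] //=; rewrite ?addr0 ?oppr0 //.
by rewrite addrCA addNKr subrr.
Qed.

Lemma in_derived_wr_prod w : in_derived wmul winv wone w -> D (wr_prod w.1).
Proof.
apply: (in_derived_morph _ wr_prodM wr_prodV).
by rewrite /wr_prod prodg1; apply: der_one.
Qed.

Fixpoint partial_prod (c : Z -> B) (k : nat) : B :=
  if k is k'.+1 then partial_prod c k' * c (inZp k') else one.

Lemma partial_prod_eq c f k :
  (forall j, (j < k)%N -> c (inZp j) = f (inZp j)) -> partial_prod c k = partial_prod f k.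
Proof.
elim: k => //= k IHk cf.
by rewrite cf // IHk // => j jk; apply/cf/ltnW.
Qed.

Lemma partial_prod_succ c (i : Z) :
  i != ord_max -> partial_prod c (i + 1)%R = partial_prod c i * c i.
Proof. by move=> /val_Zp_add1 ->; rewrite /= valZpK. Qed.

Lemma partial_prod_last c : partial_prod c (ord_max : Z) * c ord_max = wr_prod c.
Proof.
have iotaE k : partial_prod c k = prodg [seq c (inZp j) | j <- iota 0 k].
  elim: k => // k IHk.
  by rewrite -(addn1 k) iotaD addn1 map_cat prodg_cat /= -IHk mulg1.
have -> : partial_prod c (ord_max : Z) * c ord_max = partial_prod c (Zp_trunc p).+2.
  by congr (_ * c _); rewrite -[LHS]valZpK.
rewrite iotaE -val_enum_ord -map_comp.
by congr prodg; apply: eq_map => i /=; rewrite valZpK.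
Qed.

Lemma wr_prod_update_last f b :
  wr_prod (fun i => if i == ord_max then f i * b else f i) = wr_prod f * b.
Proof.
rewrite -!partial_prod_last eqxx mulgA; congr (_ * _ * _).
apply: partial_prod_eq => j jmax; rewrite ifF //; apply/negbTE.
by rewrite -val_eqE /= modn_small ?(ltn_eqF jmax) // leqW.
Qed.

Definition at_last (b : B) : Z -> B := fun i => if i == ord_max then b else one.

Lemma wr_mul_at_last x y : wmul (at_last x, 0) (at_last y, 0) = (at_last (x * y), 0).
Proof.
rewrite /wr_mul /shift addr0; congr pair; apply: functional_extensionality => i.
by rewrite subr0 /at_last /=; case: ifP => // _; rewrite mulg1.
Qed.

Lemma wr_inv_at_last x : winv (at_last x, 0) = (at_last x^-1, 0).
Proof.
rewrite /wr_inv /shift oppr0; congr pair; apply: functional_extensionality => i.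
by rewrite subr0 /at_last /=; case: ifP => // _; rewrite invg1.
Qed.

Lemma prod_comms_at_last s :
  (at_last (prod_comms mul inv one s), 0) =
  prod_comms wmul winv wone [seq ((at_last xy.1, 0), (at_last xy.2, 0)) | xy <- s].
Proof.
elim: s => [|[x y] s IHs] /=.
  by congr pair; apply: functional_extensionality => i; rewrite /at_last; case: ifP.
by rewrite -IHs /commg_op !wr_inv_at_last !wr_mul_at_last.
Qed.

(* With g i := (c 0 * ... * c (i-1))^-1 * x, the i-th coordinate of the
   commutator is g i * g (i+1)^-1 = c i, except at the last one, where the
   shifted y closes the telescope using [x, y] = c 0 * ... * c (p-1). *)
Lemma wr_base_commg c x y : wr_prod c = commg_op mul inv x y ->
  (c, 0) = commg_op wmul winv ((fun i : Z => (partial_prod c i)^-1 * x), 0) (at_last y, -1).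
Proof.
move=> cE; rewrite /commg_op /wr_mul /wr_inv; congr pair; cbn [fst snd]; last first.
  by rewrite add0r oppr0 add0r opprK addNr.
apply: functional_extensionality => i; rewrite /shift.
rewrite !(oppr0, addr0, add0r, subr0, opprK) addrK invgM invgK /at_last.
case: eqP => [->|/eqP imax].
  rewrite ord_max_add1 -[partial_prod c (0%R : Z)]/one mulg1 -mulgA.
  by rewrite -[x * _]/(commg_op mul inv x y) -cE -partial_prod_last mulKg.
by rewrite partial_prod_succ // invg1 mul1g mulg1 -mulgA mulVKg mulKg.
Qed.

Lemma wr_base_eq_commg_mul f x y r : wr_prod f = commg_op mul inv x y * r ->
  exists u v, (f, 0) = wmul (commg_op wmul winv u v) (at_last r, 0).
Proof.
move=> fE; pose c i := if i == ord_max then f i * r^-1 else f i.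
have cE : wr_prod c = commg_op mul inv x y.
  by rewrite wr_prod_update_last fE -mulgA mulgV mulg1.
exists ((fun i : Z => (partial_prod c i)^-1 * x), 0), (at_last y, -1).
rewrite -(wr_base_commg cE) /wr_mul /shift addr0; congr pair.
apply: functional_extensionality => i; rewrite subr0 /c /at_last /=.
by case: ifP => _; rewrite ?mulg1 // -mulgA mulVg mulg1.
Qed.

End WreathCommutators.

Theorem lemma4 (B : Type) (mul : B -> B -> B) (inv : B -> B) (one : B)
  (p : nat) (n : nat) :
  is_group mul inv one -> (2 <= p)%N ->
  cw_le mul inv one n ->
  cw_le (@wr_mul B mul p) (@wr_inv B inv p) (wr_one one p) (maxn 1 n).
Proof.
move=> HG _ cwB w Dw.
have [x [y [s [fE sz]]]] := cw_le_commg_cons HG cwB (in_derived_wr_prod HG Dw).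
have [u [v wE]] := wr_base_eq_commg_mul HG fE.
exists ((u, v) :: [seq ((at_last one xy.1, 0%R), (at_last one xy.2, 0%R)) | xy <- s]).
split; first by rewrite /= size_map.
by rewrite [w]surjective_pairing (in_derived_wr_top Dw) wE (prod_comms_at_last HG p).
Qed.
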